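(* For each $\varepsilon\in(0,1]$ let $f_\varepsilon\in L^1(\mathbb{R}^d)$, and let $f\in L^1(\mathbb{R}^d)$. Assume all $f_\varepsilon$ and $f$ are nonnegative, continuous, radial and radially nonincreasing, and that $f_\varepsilon\to f$ weakly as $\varepsilon\to0$ (as measures on $\mathbb{R}^d$). Then $f_\varepsilon(x)\to f(x)$ as $\varepsilon\to0$ for every $x\ne0$. *)

From HB Require Import structures.
From mathcomp Require Import all_boot all_order all_algebra.
From mathcomp Require Import all_classical all_reals all_analysis.
Set Implicit Arguments. Unset Strict Implicit. Unset Printing Implicit Defensive.
Import Order.TTheory GRing.Theory Num.Theory.
Import numFieldNormedType.Exports.
Local Open Scope classical_set_scope.
Local Open Scope ring_scope.

(* Euclidean norm on R^d (the library norm on matrices is the sup norm). *)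
Definition enorm (R : realType) (d : nat) (x : 'rV[R]_d) : R :=
  Num.sqrt (\sum_(i < d) x ord0 i ^+ 2).

(* Lebesgue integral over R^d of an extended-real valued function, realised
   as the iterated one-dimensional Lebesgue integral (first coordinate
   outermost).  For nonnegative Borel functions this is the integral with
   respect to d-dimensional Lebesgue measure (Tonelli). *)
Fixpoint iint (R : realType) (d : nat) : ('rV[R]_d -> \bar R) -> \bar R :=
  match d return ('rV[R]_d -> \bar R) -> \bar R with
  | 0 => fun g => g 0
  | d'.+1 => fun g =>
      (\int[@lebesgue_measure R]_x
         iint (fun v : 'rV[R]_d' => g (row_mx (const_mx x : 'rV[R]_1) v)))%E
  end.

Definition Rd_integral (R : realType) (d : nat) (g : 'rV[R]_d -> R) : \bar R :=
  (iint (fun x => (Num.max (g x) 0)%:E) - iint (fun x => (Num.max (- g x) 0)%:E))%E.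

Definition L1 (R : realType) (d : nat) (g : 'rV[R]_d -> R) : Prop :=
  (iint (fun x => `|g x|%:E) < +oo)%E.

Definition nice_profile (R : realType) (d : nat) (g : 'rV[R]_d -> R) : Prop :=
  [/\ forall x, 0 <= g x,
      continuous g,
      (forall x y, enorm x = enorm y -> g x = g y) &
      (forall x y, enorm x <= enorm y -> g y <= g x)].

(* weak convergence as measures (narrow convergence: tested against bounded
   continuous functions) of the densities fe e dx to f dx as e -> 0+ *)
Definition weak_cvg_0 (R : realType) (d : nat) (fe : R -> 'rV[R]_d -> R)
    (f : 'rV[R]_d -> R) : Prop :=
  forall phi : 'rV[R]_d -> R, continuous phi ->
    (exists M : R, forall x, `|phi x| <= M) ->
    (fun e => Rd_integral (fun x => phi x * fe e x)) @ 0^'+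
      --> Rd_integral (fun x => phi x * f x).

(* Weak convergence is tested against continuous bumps supported in small boxes near x, so the
   bump-weighted averages of fe e converge to the corresponding averages of f.  On a box all of
   whose points are at least as far from the origin as x, radial monotonicity makes the average
   of fe e at most fe e x; on a box all of whose points are at most as far as x (such boxes exist
   because x <> 0), it is at least fe e x.  By continuity of f both averages of f are close to
   f x, which squeezes fe e x. *)

From HB Require Import structures.
From mathcomp Require Import all_boot all_order all_algebra.
From mathcomp Require Import all_classical all_reals all_analysis.
From mathcomp Require Import measurable_realfun lra ring.
Set Implicit Arguments. Unset Strict Implicit. Unset Printing Implicit Defensive.
Import Order.TTheory GRing.Theory Num.Theory.
Import numFieldNormedType.Exports.
Local Open Scope classical_set_scope.
Local Open Scope ring_scope.

Section geometry.
Variable R : realType.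

Lemma outer_coord (a y r : R) : 0 <= r -> `|y - (a + r * Num.sg a)| < r ->
  `|a| <= `|y| /\ `|y - a| < 2 * r.
Proof.
move=> r0; have [a0|a0|->] := ltgtP a 0.
- rewrite ltr0_sg // (ltr0_norm a0) mulrN1 ltr_norml => /andP [h1 h2].
  by rewrite ler0_norm; [split; rewrite ?ltr_norml; [|apply/andP; split]|]; lra.
- rewrite gtr0_sg // (gtr0_norm a0) mulr1 ltr_norml => /andP [h1 h2].
  by rewrite ger0_norm; [split; rewrite ?ltr_norml; [|apply/andP; split]|]; lra.
- rewrite sgr0 mulr0 addr0 !subr0 normr0 => h; split; [exact: normr_ge0 | lra].
Qed.

Lemma inner_coord (a y t w : R) : 0 < t < 1 -> 0 < w ->
  `|y - ((1 - t) * a + t * w / 2 * Num.sg a)| < t * w / 2 ->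
  y ^+ 2 <= (1 - t) * a ^+ 2 + t * w ^+ 2 /\ `|y - a| <= t * (w + `|a|).
Proof.
move=> /andP [t0 t1] w0.
have convex b : 0 <= b -> ((1 - t) * b + t * w) ^+ 2 <= (1 - t) * b ^+ 2 + t * w ^+ 2.
  move=> b0; rewrite -subr_ge0.
  have -> : (1 - t) * b ^+ 2 + t * w ^+ 2 - ((1 - t) * b + t * w) ^+ 2
    = t * (1 - t) * (b - w) ^+ 2 by ring.
  by rewrite mulr_ge0 ?sqr_ge0 // mulr_ge0; lra.
have [a0|a0|->] := ltgtP a 0.
- rewrite ltr0_sg // (ltr0_norm a0) mulrN1 ltr_norml => /andP [h1 h2].
  have cv := convex (- a); rewrite sqrrN in cv.
  split; last by rewrite ler_norml; apply/andP; split; nra.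
  apply: le_trans (cv _); last lra.
  by rewrite -sqrrN; apply: lerXn2r; rewrite ?nnegrE; nra.
- rewrite gtr0_sg // (gtr0_norm a0) mulr1 ltr_norml => /andP [h1 h2].
  have cv := convex a (ltW a0).
  split; last by rewrite ler_norml; apply/andP; split; nra.
  by apply: le_trans cv; apply: lerXn2r; rewrite ?nnegrE; nra.
- rewrite sgr0 !mulr0 subr0 normr0 addr0 ltr_norml => /andP [h1 h2].
  by split; [rewrite expr0n /= mulr0 add0r | rewrite ler_norml; apply/andP; split]; nra.
Qed.

Definition box (d : nat) (c : 'rV[R]_d) (r : R) (y : 'rV[R]_d) : Prop :=
  forall i, `|y ord0 i - c ord0 i| < r.

Lemma enorm_le (d : nat) (x y : 'rV[R]_d) :
  (forall i, `|x ord0 i| <= `|y ord0 i|) -> enorm x <= enorm y.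
Proof.
move=> xy; rewrite /enorm ler_sqrt; last by rewrite sumr_ge0 // => i _; rewrite sqr_ge0.
apply: ler_sum => i _; rewrite -[x _ _ ^+ 2]real_normK ?num_real // -[y _ _ ^+ 2]real_normK ?num_real //.
by apply: lerXn2r; rewrite ?nnegrE.
Qed.

Lemma outer_box (d : nat) (x : 'rV[R]_d) (rho : R) : 0 < rho ->
  exists c r, 0 < r /\ forall y, box c r y -> enorm x <= enorm y /\ box x rho y.
Proof.
move=> rho0; exists (\row_i (x ord0 i + rho / 2 * Num.sg (x ord0 i))), (rho / 2).
split=> [|y yc]; first lra.
have {}yc i : `|x ord0 i| <= `|y ord0 i| /\ `|y ord0 i - x ord0 i| < 2 * (rho / 2).
  by apply: outer_coord; [lra | have := yc i; rewrite mxE].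
split; first by apply: enorm_le => i; case: (yc i).
by move=> i; case: (yc i) => _; rewrite mulrC divfK ?pnatr_eq0.
Qed.

Lemma sum_sqr_weight (d : nat) (x : 'rV[R]_d) : x != 0 ->
  exists2 w, 0 < w & d%:R * w ^+ 2 <= \sum_(i < d) x ord0 i ^+ 2.
Proof.
move=> x0; have [j xj] : exists j, x ord0 j != 0.
  apply/existsP; apply: contraNT x0 => /existsPn x0.
  by apply/eqP/rowP => i; rewrite mxE; apply/eqP/negPn.
have d0 : (0 < d)%N by apply: leq_ltn_trans (ltn_ord j).
exists (`|x ord0 j| / d%:R); first by rewrite divr_gt0 ?normr_gt0 ?ltr0n.
have xjS : x ord0 j ^+ 2 <= \sum_(i < d) x ord0 i ^+ 2.
  by rewrite (bigD1 j) //= lerDl sumr_ge0 // => i _; rewrite sqr_ge0.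
apply: le_trans xjS; rewrite expr_div_n real_normK ?num_real //.
have -> : d%:R * (x ord0 j ^+ 2 / d%:R ^+ 2) = x ord0 j ^+ 2 / d%:R.
  by field; rewrite pnatr_eq0 -lt0n.
by rewrite ler_pdivrMr ?ltr0n // ler_peMr ?ler1n // sqr_ge0.
Qed.

(* The centre is (1 - t) x moved outwards by t w / 2 in every coordinate; convexity of squaring
   gives y_i^2 <= (1 - t) x_i^2 + t w^2, and d w^2 <= |x|^2 keeps the sum below |x|^2. *)
Lemma inner_box (d : nat) (x : 'rV[R]_d) (rho : R) : x != 0 -> 0 < rho ->
  exists c r, 0 < r /\ forall y, box c r y -> enorm y <= enorm x /\ box x rho y.
Proof.
move=> /sum_sqr_weight [w w0 dw2] rho0.
pose K := w + \sum_(i < d) `|x ord0 i|.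
have xK i : w + `|x ord0 i| <= K by rewrite lerD2l (bigD1 i) //= lerDl sumr_ge0.
have K0 : 0 < K by rewrite /K ltr_wpDr ?sumr_ge0.
pose t := Num.min (1 / 2) (rho / (2 * K)).
have t01 : 0 < t < 1.
  apply/andP; split; last by rewrite gt_min; apply/orP; left; lra.
  by rewrite lt_min; apply/andP; split; [lra | apply: divr_gt0 => //; lra].
have tK : t * K <= rho / 2.
  have : t <= rho / (2 * K) by rewrite ge_min lexx orbT.
  by rewrite ler_pdivlMr ?mulr_gt0 //; lra.
exists (\row_i ((1 - t) * x ord0 i + t * w / 2 * Num.sg (x ord0 i))), (t * w / 2).
split=> [|y yc]; first by case/andP: t01 => t0 _; have := mulr_gt0 t0 w0; lra.
have {}yc i : y ord0 i ^+ 2 <= (1 - t) * x ord0 i ^+ 2 + t * w ^+ 2 /\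
    `|y ord0 i - x ord0 i| <= t * (w + `|x ord0 i|).
  by apply: inner_coord => //; have := yc i; rewrite mxE.
split=> [|i].
  rewrite /enorm ler_sqrt ?sumr_ge0 // => [|i _]; last exact: sqr_ge0.
  apply: le_trans (ler_sum _ (fun i _ => proj1 (yc i))) _.
  rewrite big_split /= -mulr_sumr sumr_const card_ord -mulr_natl.
  case/andP: t01 => t0 t1; have := ler_wpM2l (ltW t0) dw2; nra.
case/andP: t01 => t0 _; apply: le_lt_trans (proj2 (yc i)) _.
by have := ler_wpM2l (ltW t0) (xK i); lra.
Qed.

Lemma continuous_box (d : nat) (f : 'rV[R]_d -> R) (x : 'rV[R]_d) : continuous f ->
  forall eta, 0 < eta -> exists2 rho, 0 < rho & forall y, box x rho y -> `|f y - f x| < eta.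
Proof.
move=> cf eta eta0; have /cvgrPdist_lt /(_ eta eta0) /nbhs_ballP [rho rho0 near_x] := cf x.
exists rho => // y xy; rewrite distrC; apply: near_x; split=> // i j.
by rewrite (ord1 i) /ball /= distrC; apply: xy.
Qed.

Lemma nice_profile_bounds (d : nat) (g : 'rV[R]_d -> R) :
  nice_profile g -> forall y, 0 <= g y <= g 0.
Proof.
case=> g0 _ _ g_mono y; rewrite g0 g_mono //.
by apply: enorm_le => i; rewrite mxE normr0 normr_ge0.
Qed.

End geometry.

Section bump.
Variable R : realType.

Lemma continuous_prod (T : topologicalType) (I : Type) (r : seq I) (F : I -> T -> R) :
  (forall i, continuous (F i)) -> continuous (fun y => \prod_(i <- r) F i y).
Proof.
move=> cF; elim: r => [|i r IH].
  by under eq_fun do rewrite big_nil; exact: cst_continuous.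
by under eq_fun do rewrite big_cons; move=> y; apply: continuousM; [exact: cF | exact: IH].
Qed.

Definition tent (r t : R) : R := Num.max 0 (r - `|t|).

Lemma tent_continuous r : continuous (tent r).
Proof.
move=> t; apply: (@continuous_max _ _ (fun _ => 0) (fun t => r - `|t|)).
  exact: cst_continuous.
by apply: continuousB; [exact: cst_continuous | exact: norm_continuous].
Qed.

Lemma tent_ge0 r t : 0 <= tent r t.
Proof. by rewrite /tent le_max lexx. Qed.

Lemma tent_le r t : 0 <= r -> tent r t <= r.
Proof. by move=> r0; rewrite /tent ge_max r0 gerBl normr_ge0. Qed.

Lemma tent_le_indic r c t : 0 <= r -> tent r (t - c) <= r * \1_(`[c - r, c + r]) t.
Proof.
move=> r0; rewrite indicE mem_setE in_itv /=.
case: (boolP (c - r <= t <= c + r)) => /= [_|]; first by rewrite mulr1 tent_le.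
rewrite mulr0 /tent ge_max lexx subr_le0 negb_and -!ltNge.
by case/orP => ?; [rewrite ltr0_norm | rewrite gtr0_norm]; lra.
Qed.

Lemma indic_le_tent r c t : 0 <= r ->
  r / 2 * \1_(`[c - r / 2, c + r / 2]) t <= tent r (t - c).
Proof.
move=> r0; rewrite indicE mem_setE in_itv /=.
case: (boolP (c - r / 2 <= t <= c + r / 2)) => /= [/andP [t1 t2]|_]; last by rewrite mulr0 tent_ge0.
have : `|t - c| <= r / 2 by rewrite ler_norml; apply/andP; split; lra.
by rewrite mulr1 /tent le_max; lra.
Qed.

(* Squeezed between multiples of indicators of boxes, so its integral is finite and positive. *)
Definition bump (d : nat) (c : 'rV[R]_d) (r : R) (y : 'rV[R]_d) : R :=
  \prod_(i < d) tent r (y ord0 i - c ord0 i).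

Variables (d : nat) (c : 'rV[R]_d) (r : R).

Lemma bump_ge0 (y : 'rV[R]_d) : 0 <= bump c r y.
Proof. by apply: prodr_ge0 => i _; apply: tent_ge0. Qed.

Lemma bump_le (y : 'rV[R]_d) : 0 <= r -> bump c r y <= r ^+ d.
Proof.
move=> r0; rewrite -[d in r ^+ d]card_ord -prodr_const.
by apply: ler_prod => i _; rewrite tent_ge0 tent_le.
Qed.

Lemma bump_neq0_box (y : 'rV[R]_d) : bump c r y != 0 -> box c r y.
Proof.
move=> /prodf_neq0 tent_neq0 i; rewrite -subr_gt0.
by apply: contraNT (tent_neq0 i isT); rewrite -leNgt /tent => ?; rewrite max_l.
Qed.

Lemma bump_continuous : continuous (bump c r).
Proof.
apply: continuous_prod => i y.
apply: (continuous_comp (f := fun y : 'rV[R]_d => y ord0 i - c ord0 i)); last exact: tent_continuous.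
by apply: continuousB; [exact: coord_continuous | exact: cst_continuous].
Qed.

Lemma bump_le_indic (y : 'rV[R]_d) : 0 <= r ->
  bump c r y <= r ^+ d * \prod_(i < d) \1_(`[c ord0 i - r, c ord0 i + r]) (y ord0 i).
Proof.
move=> r0; rewrite -[d in r ^+ d]card_ord -prodr_const -big_split /=.
by apply: ler_prod => i _; rewrite tent_ge0 tent_le_indic.
Qed.

Lemma indic_le_bump (y : 'rV[R]_d) : 0 <= r ->
  (r / 2) ^+ d * \prod_(i < d) \1_(`[c ord0 i - r / 2, c ord0 i + r / 2]) (y ord0 i)
  <= bump c r y.
Proof.
move=> r0; rewrite -[d in _ ^+ d]card_ord -prodr_const -big_split /=.
apply: ler_prod => i _; rewrite indic_le_tent // mulr_ge0 ?indic_ge0 //; lra.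
Qed.

End bump.

Local Open Scope ereal_scope.

(* The integral of a nonnegative function is monotone and positively homogeneous even without
   measurability; the iterated integrals [iint] are not known to be measurable in the outer
   variable, so the library versions of these facts do not apply. *)
Section nonnegative_integral.
Context d (T : measurableType d) (R : realType) (mu : {measure set T -> \bar R}).
Import HBNNSimple.

Lemma ge0_le_integralT (f g : T -> \bar R) : (forall x, 0 <= f x) ->
  (forall x, f x <= g x) -> \int[mu]_x f x <= \int[mu]_x g x.
Proof.
move=> f0 fg; have g0 x : 0 <= g x by apply: le_trans (fg x).
rewrite !ge0_integralTE //=; apply: ge_ereal_sup => _ [h hf <-].
by apply: ereal_sup_ubound; exists h => // x; apply: le_trans (fg x).
Qed.

Lemma ge0_integralZlT_le (f : T -> \bar R) (k : R) : (0 < k)%R ->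
  (forall x, 0 <= f x) -> \int[mu]_x (k%:E * f x) <= k%:E * \int[mu]_x f x.
Proof.
move=> k0 f0; have kf0 x : 0 <= k%:E * f x by rewrite mule_ge0 // lee_fin ltW.
rewrite !ge0_integralTE //=; apply: ge_ereal_sup => _ [h hf <-].
have ik0 : (0 <= k^-1)%R by rewrite invr_ge0 ltW.
pose h' := scale_nnsfun h ik0.
have -> : sintegral mu h = k%:E * sintegral mu h'.
  rewrite /h' /= sintegralrM muleA -EFinM divff ?gt_eqF // mul1e.
  by apply: eq_sintegral => x.
rewrite lee_pmul2l ?lte_fin //; apply: ereal_sup_ubound; exists h' => // x.
rewrite /h' /= -(@lee_pmul2l _ k%:E) ?lte_fin // -EFinM mulrA divff ?gt_eqF // mul1r.
exact: hf.
Qed.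

Lemma ge0_integralZlT (f : T -> \bar R) (k : R) : (0 <= k)%R ->
  (forall x, 0 <= f x) -> \int[mu]_x (k%:E * f x) = k%:E * \int[mu]_x f x.
Proof.
move=> k0 f0; have [->|kp] := eqVneq k 0%R.
  by rewrite mul0e; under eq_integral do rewrite mul0e; rewrite integral0.
have {k0 kp} k0 : (0 < k)%R by rewrite lt_neqAle eq_sym kp.
apply/eqP; rewrite eq_le ge0_integralZlT_le //=.
have kf0 x : 0 <= k%:E * f x by rewrite mule_ge0 // lee_fin ltW.
have := ge0_integralZlT_le (k := k^-1) _ kf0; rewrite invr_gt0 => /(_ k0).
under eq_integral do rewrite muleA -EFinM mulVf ?gt_eqF // mul1e.
by move=> h; rewrite -(@lee_pmul2l _ k^-1%:E) ?lte_fin ?invr_gt0 // muleA -EFinM mulVf ?gt_eqF // mul1e.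
Qed.

End nonnegative_integral.

Section iterated_integral.
Context (R : realType).

Lemma eq_iint (d : nat) (g h : 'rV[R]_d -> \bar R) : g =1 h -> iint g = iint h.
Proof. by move=> /funext ->. Qed.

Lemma iint_ge0 (d : nat) (g : 'rV[R]_d -> \bar R) : (forall x, 0 <= g x) -> 0 <= iint g.
Proof.
elim: d g => [|d IH] g g0 /=; first exact: g0.
by apply: integral_ge0 => x _; apply: IH.
Qed.

Lemma le_iint (d : nat) (g h : 'rV[R]_d -> \bar R) : (forall x, 0 <= g x) ->
  (forall x, g x <= h x) -> iint g <= iint h.
Proof.
elim: d g h => [|d IH] g h g0 gh /=; first exact: gh.
apply: ge0_le_integralT => x; first exact: iint_ge0.
exact: IH.
Qed.

Lemma iintZl (d : nat) (g : 'rV[R]_d -> \bar R) (k : R) : (0 <= k)%R ->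
  (forall x, 0 <= g x) -> iint (fun x => k%:E * g x) = k%:E * iint g.
Proof.
elim: d g => [|d IH] g k0 g0 //=.
under eq_integral do rewrite IH //.
by rewrite ge0_integralZlT // => x; apply: iint_ge0.
Qed.

Lemma iint0 (d : nat) : iint (fun _ : 'rV[R]_d => 0) = 0.
Proof. by elim: d => [|d IH] //=; under eq_integral do rewrite IH; rewrite integral0. Qed.

Lemma Rd_integral_ge0 (d : nat) (g : 'rV[R]_d -> R) : (forall y, 0 <= g y)%R ->
  Rd_integral g = iint (fun y => (g y)%:E).
Proof.
move=> g0; rewrite /Rd_integral.
rewrite (_ : (fun y => (Num.max (- g y) 0)%:E) = fun _ => 0); last first.
  by apply/funext => y; rewrite max_r // oppr_le0.
by rewrite iint0 sube0; apply: eq_iint => y; rewrite max_l.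
Qed.

Lemma row_mx_const_ord0 (d : nat) (x : R) (v : 'rV[R]_d) :
  row_mx (const_mx x : 'rV[R]_1) v ord0 ord0 = x.
Proof.
have -> : (ord0 : 'I_(1 + d)) = lshift d ord0 by apply: val_inj.
by rewrite row_mxEl mxE.
Qed.

Lemma row_mx_const_lift (d : nat) (x : R) (v : 'rV[R]_d) (i : 'I_d) :
  row_mx (const_mx x : 'rV[R]_1) v ord0 (lift ord0 i) = v ord0 i.
Proof.
have -> : (lift ord0 i : 'I_(1 + d)) = rshift 1 i by apply: val_inj.
by rewrite row_mxEr.
Qed.

Lemma iint_indic_box (d : nat) (a b : 'I_d -> R) : (forall i, a i <= b i)%R ->
  iint (fun y : 'rV[R]_d => (\prod_(i < d) \1_(`[a i, b i]) (y ord0 i))%:E)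
  = (\prod_(i < d) (b i - a i))%:E.
Proof.
elim: d a b => [|d IH] a b ab /=; first by rewrite !big_ord0.
under eq_integral do under eq_iint do rewrite big_ord_recl row_mx_const_ord0 EFinM.
under eq_integral => x _.
  rewrite iintZl //; last by move=> v; rewrite lee_fin prodr_ge0.
  under eq_iint do under eq_bigr do rewrite row_mx_const_lift.
  rewrite (IH (fun i => a (lift ord0 i)) (fun i => b (lift ord0 i))) //.
  over.
rewrite /= ge0_integralZr; last first.
- by rewrite lee_fin prodr_ge0 // => i _; rewrite subr_ge0.
- by move=> x _; rewrite lee_fin.
- by apply/measurable_EFinP; apply: measurable_indic.
- exact: measurableT.
rewrite integral_indic ?setIT //.
have itv_ab : lebesgue_measure (`[a ord0, b ord0] : set R) = (b ord0 - a ord0)%:E.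
  rewrite lebesgue_measure_itv /= lte_fin.
  by case: ltgtP (ab ord0) => // -> _; rewrite subrr.
rewrite [X in X * _](_ : _ = (b ord0 - a ord0)%:E); last exact: itv_ab.
by rewrite big_ord_recl -EFinM.
Qed.

End iterated_integral.

Section weighted_average.
Context (R : realType) (d : nat) (c : 'rV[R]_d) (r : R).
Hypothesis r0 : (0 < r)%R.

Lemma iint_bump : exists2 I : R, (0 < I)%R & iint (fun y => (bump c r y)%:E) = I%:E.
Proof.
pose indic (s : R) (y : 'rV[R]_d) : R :=
  (\prod_(i < d) \1_(`[c ord0 i - s, c ord0 i + s]) (y ord0 i))%R.
have indic0 s y : 0 <= (indic s y)%:E by rewrite lee_fin prodr_ge0 // => i _; exact: indic_ge0.
have iint_indic s : (0 <= s)%R -> iint (fun y => (indic s y)%:E) = ((2 * s) ^+ d)%:E.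
  move=> s0; rewrite iint_indic_box => [|i]; last lra.
  congr _%:E; rewrite -[d in RHS]card_ord -prodr_const; apply: eq_bigr => i _; ring.
have r_ge0 : (0 <= r)%R by exact: ltW.
have r20 : (0 <= r / 2)%R by rewrite divr_ge0.
have lower : ((r / 2) ^+ d * r ^+ d)%:E <= iint (fun y => (bump c r y)%:E).
  have -> : (r ^+ d = (2 * (r / 2)) ^+ d)%R by rewrite mulrC divfK ?pnatr_eq0.
  rewrite EFinM -iint_indic // -iintZl ?exprn_ge0 //.
  apply: le_iint => y; first by apply: mule_ge0; [rewrite lee_fin exprn_ge0 | exact: indic0].
  by rewrite -EFinM lee_fin; exact: indic_le_bump.
have upper : iint (fun y => (bump c r y)%:E) <= (r ^+ d * (2 * r) ^+ d)%:E.
  rewrite EFinM -iint_indic // -iintZl ?exprn_ge0 //.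
  apply: le_iint => y; first by rewrite lee_fin bump_ge0.
  by rewrite -EFinM lee_fin; exact: bump_le_indic.
have L0 : (0 < (r / 2) ^+ d * r ^+ d)%R by rewrite mulr_gt0 ?exprn_gt0 ?divr_gt0.
have fin : iint (fun y => (bump c r y)%:E) \is a fin_num.
  by rewrite fin_numElt (lt_le_trans _ lower) ?ltNyr // (le_lt_trans upper) ?ltry.
exists (fine (iint (fun y => (bump c r y)%:E))); last by rewrite fineK.
by rewrite -lte_fin fineK // (lt_le_trans _ lower) ?lte_fin.
Qed.

Lemma iint_bump_mul_le (g : 'rV[R]_d -> R) (k : R) : (0 <= k)%R ->
  (forall y, 0 <= g y)%R -> (forall y, box c r y -> g y <= k)%R ->
  iint (fun y => (bump c r y * g y)%:E) <= k%:E * iint (fun y => (bump c r y)%:E).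
Proof.
move=> k0 g0 gk; rewrite -iintZl // => [|y]; last by rewrite lee_fin bump_ge0.
apply: le_iint => y; first by rewrite lee_fin mulr_ge0 ?bump_ge0.
rewrite -EFinM lee_fin [(k * _)%R]mulrC.
have [/eqP ->|/bump_neq0_box/gk gyk] := boolP (bump c r y == 0%R); first by rewrite !mul0r.
by rewrite ler_wpM2l ?bump_ge0.
Qed.

Lemma iint_bump_mul_ge (g : 'rV[R]_d -> R) (k : R) : (0 <= k)%R ->
  (forall y, box c r y -> k <= g y)%R ->
  k%:E * iint (fun y => (bump c r y)%:E) <= iint (fun y => (bump c r y * g y)%:E).
Proof.
move=> k0 kg; rewrite -iintZl // => [|y]; last by rewrite lee_fin bump_ge0.
apply: le_iint => y; first by rewrite -EFinM lee_fin mulr_ge0 ?bump_ge0.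
rewrite -EFinM lee_fin mulrC.
have [/eqP ->|/bump_neq0_box/kg kgy] := boolP (bump c r y == 0%R); first by rewrite !mul0r.
by rewrite ler_wpM2l ?bump_ge0.
Qed.

Lemma iint_bump_mul_fin (g : 'rV[R]_d -> R) (k : R) : (0 <= k)%R ->
  (forall y, 0 <= g y)%R -> (forall y, box c r y -> g y <= k)%R ->
  iint (fun y => (bump c r y * g y)%:E) \is a fin_num.
Proof.
move=> k0 g0 gk; have [I _ bumpI] := iint_bump.
have := iint_bump_mul_le k0 g0 gk; rewrite bumpI -EFinM => le_MI.
rewrite fin_numElt (le_lt_trans le_MI) ?ltry // andbT (lt_le_trans _ (iint_ge0 _)) ?ltNy0 // => y.
by rewrite lee_fin mulr_ge0 ?bump_ge0.
Qed.

Definition wavg (g : 'rV[R]_d -> R) : R :=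
  (fine (iint (fun y => (bump c r y * g y)%:E)) / fine (iint (fun y => (bump c r y)%:E)))%R.

Lemma wavg_le (g : 'rV[R]_d -> R) (k : R) : (0 <= k)%R ->
  (forall y, 0 <= g y)%R -> (forall y, box c r y -> g y <= k)%R -> (wavg g <= k)%R.
Proof.
move=> k0 g0 gk; have [I I0 bumpI] := iint_bump.
have := iint_bump_mul_le k0 g0 gk.
by rewrite /wavg bumpI -(fineK (iint_bump_mul_fin k0 g0 gk)) -EFinM lee_fin ler_pdivrMr.
Qed.

Lemma wavg_ge (g : 'rV[R]_d -> R) (M k : R) : (forall y, 0 <= g y <= M)%R ->
  (forall y, box c r y -> k <= g y)%R -> (k <= wavg g)%R.
Proof.
move=> gM kg; have [I I0 bumpI] := iint_bump.
have g0 y : (0 <= g y)%R by case/andP: (gM y).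
have gleM y : (g y <= M)%R by case/andP: (gM y).
have fin := iint_bump_mul_fin (le_trans (g0 0%R) (gleM 0%R)) g0 (fun y _ => gleM y).
rewrite /wavg bumpI /= ler_pdivlMr //.
have [k0|k_lt0] := leP 0%R k.
  by have := iint_bump_mul_ge k0 kg; rewrite bumpI -(fineK fin) -EFinM lee_fin.
apply: le_trans (fine_ge0 (iint_ge0 _)) => [|y]; last by rewrite lee_fin mulr_ge0 ?bump_ge0.
by rewrite nmulr_rle0 // ltW.
Qed.

Lemma wavg_cvg (fe : R -> 'rV[R]_d -> R) (f : 'rV[R]_d -> R) (M : R) :
  (\forall e \near 0%R^'+, forall y, 0 <= fe e y)%R -> (forall y, 0 <= f y <= M)%R ->
  weak_cvg_0 fe f -> (wavg (fe e) @[e --> 0%R^'+] --> wavg f)%R.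
Proof.
move=> fe0 fM wcvg; have [I I0 bumpI] := iint_bump.
have f0 y : (0 <= f y)%R by case/andP: (fM y).
have fleM y : (f y <= M)%R by case/andP: (fM y).
have bump_bounded y : (`|bump c r y| <= r ^+ d)%R.
  by rewrite ger0_norm ?bump_ge0 // bump_le // ltW.
have := wcvg _ (@bump_continuous _ _ c r) (ex_intro _ _ bump_bounded).
rewrite Rd_integral_ge0 => [|y]; last by rewrite mulr_ge0 ?bump_ge0.
have fin := iint_bump_mul_fin (le_trans (f0 0%R) (fleM 0%R)) f0 (fun y _ => fleM y).
rewrite -(fineK fin) => /fine_cvgP [_ cv].
rewrite /wavg bumpI; apply: cvgM; last exact: cvg_cst.
apply: cvg_trans cv; apply: near_eq_cvg; near=> e.
have fe_e0 : forall y, (0 <= fe e y)%R by near: e.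
by rewrite /= Rd_integral_ge0 // => y; rewrite mulr_ge0 ?bump_ge0.
Unshelve. all: by end_near. Qed.

Lemma wavg_outer_le (g : 'rV[R]_d -> R) (x : 'rV[R]_d) : nice_profile g ->
  (forall y, box c r y -> enorm x <= enorm y)%R -> (wavg g <= g x)%R.
Proof. by case=> g0 _ _ g_mono far; apply: wavg_le => // y /far /g_mono. Qed.

Lemma wavg_inner_ge (g : 'rV[R]_d -> R) (x : 'rV[R]_d) : nice_profile g ->
  (forall y, box c r y -> enorm y <= enorm x)%R -> (g x <= wavg g)%R.
Proof.
move=> /[dup] /nice_profile_bounds gM [_ _ _ g_mono] near.
by apply: wavg_ge gM _ => y /near /g_mono.
Qed.

End weighted_average.

Local Close Scope ereal_scope.

Theorem lemma2p6 (R : realType) (d : nat) (fe : R -> 'rV[R]_d -> R)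
    (f : 'rV[R]_d -> R) :
  (forall e, 0 < e <= 1 -> L1 (fe e) /\ nice_profile (fe e)) ->
  L1 f -> nice_profile f ->
  weak_cvg_0 fe f ->
  forall x : 'rV[R]_d, x != 0 -> (fun e => fe e x) @ 0^'+ --> f x.
Proof.
move=> Hfe _ f_nice wcvg x x0.
have fe_nice : \forall e \near 0^'+, nice_profile (fe e).
  near=> e; apply: (proj2 (Hfe e _)).
  by apply/andP; split; near: e; [exact: nbhs_right_gt | exact: nbhs_right_le].
have fe0 : \forall e \near 0^'+, forall y, 0 <= fe e y by apply: filterS fe_nice => e [].
have [f0 fcont _ _] := f_nice; have fM := nice_profile_bounds f_nice.
apply/cvgrPdist_lt => eta eta0; have eta2 : 0 < eta / 2 by lra.
have [rho rho0 f_near] := continuous_box x fcont eta2.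
have [c1 [r1 [r1_0 outer]]] := outer_box x rho0.
have [c2 [r2 [r2_0 inner]]] := inner_box x0 rho0.
have lo : f x - eta / 2 <= wavg c1 r1 f.
  apply: (wavg_ge r1_0 fM) => y /outer [_ /f_near].
  by rewrite ltr_norml => /andP [? _]; lra.
have up : wavg c2 r2 f <= f x + eta / 2.
  apply: (wavg_le r2_0 _ f0) => [|y /inner [_ /f_near]]; first by have := f0 x; lra.
  by rewrite ltr_norml => /andP [_ ?]; lra.
have /cvgr_dist_lt /(_ _ eta2) near1 := wavg_cvg (c := c1) r1_0 fe0 fM wcvg.
have /cvgr_dist_lt /(_ _ eta2) near2 := wavg_cvg (c := c2) r2_0 fe0 fM wcvg.
near=> e; have fe_e : nice_profile (fe e) by near: e.
have lo_e := wavg_outer_le r1_0 fe_e (fun y yb => (outer y yb).1).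
have up_e := wavg_inner_ge r2_0 fe_e (fun y yb => (inner y yb).1).
have : `|wavg c1 r1 f - wavg c1 r1 (fe e)| < eta / 2 by near: e.
have : `|wavg c2 r2 f - wavg c2 r2 (fe e)| < eta / 2 by near: e.
rewrite !ltr_norml => /andP [? ?] /andP [? ?]; apply/andP; split; lra.
Unshelve. all: by end_near. Qed.
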